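(* In symmetric private information retrieval with $N=2$ databases and $K=3$ messages of length $L$, when the upload cost is $U=2\log_2 4=4$, the optimal (minimum achievable) download cost is $D=2L$, and the minimal amount of required common randomness is $H(\mathcal{R})=L$.
   Context: SPIR setting: each of $N$ non-colluding databases stores the same $K$ i.i.d. messages $W_1,\dots,W_K$, each consisting of $L$ i.i.d. uniform symbols from a sufficiently large finite field $\mathbb{F}_q$ (entropies in $q$-ary units, $H(W_k)=L$, $H(W_{1:K})=KL$). The user wants $W_k$, $k\in[K]$, with private randomness $\mathcal{F}$; the databases share common randomness $\mathcal{R}$, and $I(W_{1:K};k,\mathcal{F},\mathcal{R})=0$. Queries $Q_n^{[k]}$ are deterministic functions of $\mathcal{F}$; answers satisfy $H(A_n^{[k]}\mid Q_n^{[k]},W_{1:K},\mathcal{R})=0$. Achievability requires reliability $H(W_k\mid\mathcal{F},A_{1:N}^{[k]})=0$; user privacy: for all $n$ and $k'\neq k$, $(Q_n^{[k]},A_n^{[k]},W_{1:K},\mathcal{R})\sim(Q_n^{[k']},A_n^{[k']},W_{1:K},\mathcal{R})$; database privacy $I(W_{\bar k};\mathcal{F},A_{1:N}^{[k]})=0$ with $W_{\bar k}=\{W_j:j\neq k\}$. Upload cost $U$: total number of bits sent from user to databases ($U=4$ when each of the two queries takes one of 4 values). Download cost $D$: total size of the answers (in the same units as $L$). Common randomness amount: $H(\mathcal{R})$. *)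

From HB Require Import structures.
From mathcomp Require Import all_boot all_order all_algebra.
From mathcomp Require Import reals exp.
Set Implicit Arguments. Unset Strict Implicit. Unset Printing Implicit Defensive.
Import Order.TTheory GRing.Theory Num.Theory.
Local Open Scope ring_scope.

Definition is_dist (R : realType) (T : finType) (p : T -> R) : Prop :=
  (forall t, 0 <= p t) /\ \sum_(t : T) p t = 1.

Definition logb (R : realType) (q : nat) (x : R) : R := ln x / ln (q%:R).

Definition msgs (F : finFieldType) (L : nat) := {ffun 'I_3 -> 'rV[F]_L}.

(* A scheme: user randomness F (type TF, law pF), database common randomness
   R (type TR, law pR), queries Q_n^{[k]} = query n k F with values in a
   4-letter alphabet (so U = 2 log2 4 = 4 bits), answers
   A_n^{[k]} = answer n Q_n^{[k]} W R with values in a finite alphabet TA n. *)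
Record scheme (F : finFieldType) (L : nat) (R : realType) := Scheme {
  sTF : finType;
  sTR : finType;
  pF : sTF -> R;
  pR : sTR -> R;
  sTA : 'I_2 -> finType;
  query : 'I_2 -> 'I_3 -> sTF -> 'I_4;
  answer : forall n : 'I_2, 'I_4 -> msgs F L -> sTR -> sTA n
}.

Arguments sTF {F L R} s.
Arguments sTR {F L R} s.
Arguments pF {F L R} s _.
Arguments pR {F L R} s _.
Arguments sTA {F L R} s _.
Arguments query {F L R} s _ _ _.
Arguments answer {F L R} s n _ _ _.

Section Model.
Variables (F : finFieldType) (L : nat) (R : realType) (S : scheme F L R).

Definition Omega : finType := (sTF S * sTR S * msgs F L)%type.

Definition qF : nat := #|F|.

Definition Pr (w : Omega) : R :=
  pF S w.1.1 * pR S w.1.2 / (#|msgs F L|%:R).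

Definition law (T : finType) (X : Omega -> T) (t : T) : R :=
  \sum_(w : Omega | X w == t) Pr w.

Definition H (T : finType) (X : Omega -> T) : R :=
  - \sum_(t : T) (if law X t == 0 then 0 else law X t * logb qF (law X t)).

Definition condH (T U : finType) (X : Omega -> T) (Y : Omega -> U) : R :=
  H (fun w => (X w, Y w)) - H Y.

Definition MI (T U : finType) (X : Omega -> T) (Y : Omega -> U) : R :=
  H X + H Y - H (fun w => (X w, Y w)).

Definition rvF (w : Omega) : sTF S := w.1.1.
Definition rvR (w : Omega) : sTR S := w.1.2.
Definition rvW (w : Omega) : msgs F L := w.2.
Definition rvWk (k : 'I_3) (w : Omega) : 'rV[F]_L := w.2 k.
(* W_{\bar k}: all messages other than W_k (the k-th entry is erased) *)
Definition rvWbar (k : 'I_3) (w : Omega) : msgs F L :=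
  [ffun j => if j == k then 0 else w.2 j].
Definition rvQ (n : 'I_2) (k : 'I_3) (w : Omega) : 'I_4 := query S n k (rvF w).
Definition rvA (n : 'I_2) (k : 'I_3) (w : Omega) : sTA S n :=
  answer S n (rvQ n k w) (rvW w) (rvR w).

Definition valid : Prop :=
  [/\ is_dist (pF S), is_dist (pR S),
      (* reliability *)
      (forall k : 'I_3,
        condH (rvWk k) (fun w => (rvF w, rvA ord0 k w, rvA (lift ord0 ord0) k w)) = 0),
      (* user privacy *)
      (forall (n : 'I_2) (k k' : 'I_3), k != k' ->
        law (fun w => (rvQ n k w, rvA n k w, rvW w, rvR w)) =
        law (fun w => (rvQ n k' w, rvA n k' w, rvW w, rvR w))) &
      (* database privacy *)
      (forall k : 'I_3,
        MI (rvWbar k) (fun w => (rvF w, rvA ord0 k w, rvA (lift ord0 ord0) k w)) = 0)].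

Definition download : R := \sum_(n : 'I_2) logb qF (#|sTA S n|%:R).

Definition common_rand : R := H rvR.

End Model.

From Pilot Require Import Defs.
From HB Require Import structures.
From mathcomp Require Import all_boot all_order all_algebra.
From mathcomp Require Import reals exp.
From mathcomp Require Import ring lra zify.
(* Fix a message [k] and some [k' <> k].  By user privacy the query
   [Q_n] and answer [A_n] of database [n] are distributed as when [W_k'] is
   retrieved, so by database privacy they carry no information about [W_k]; as
   [A_n] sees the user randomness [F] only through [Q_n], I(W_k; A_n | F) = 0.
   With reliability this gives H(F, A_0, A_1) >= H(W_k) + H(F, A_n) for both [n],
   and submodularity turns it into H(A_n | F) >= H(W_k) >= L, whence D >= 2L.
   Database privacy makes the user's view (F, A_0, A_1) independent of the other
   messages, while the view and W together are a function of (R, F, W); counting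
   entropies gives H(R) >= H(W_k) >= L. *)

Set Implicit Arguments. Unset Strict Implicit. Unset Printing Implicit Defensive.
Import Order.TTheory GRing.Theory Num.Theory.
Local Open Scope ring_scope.

Lemma logb_expn (R : realType) (q n : nat) : (1 < q)%N -> logb q (q ^ n)%:R = n%:R :> R.
Proof.
move=> q_gt1; have lnq_gt0 : 0 < ln (q%:R : R) by rewrite ln_gt0 // ltr1n.
rewrite /logb natrX lnXn ?ltr0n 1?ltnW // -(mulr_natl (ln _) n).
by rewrite mulfK // gt_eqF.
Qed.

Lemma qF_gt1 (F : finFieldType) : (1 < qF F)%N.
Proof. exact: card_finNzRing_gt1. Qed.

Lemma card_rV (F : finFieldType) (L : nat) : #|'rV[F]_L| = (qF F ^ L)%N.
Proof. by rewrite card_mx mul1n. Qed.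

Lemma card_msgs (F : finFieldType) (L : nat) : #|msgs F L| = (qF F ^ (3 * L))%N.
Proof. by rewrite card_ffun card_ord card_rV -expnM mulnC. Qed.

Lemma is_dist_uniform (R : realType) (T : finType) :
  (0 < #|T|)%N -> is_dist (fun _ : T => (#|T|%:R : R)^-1).
Proof.
move=> T_gt0; split=> [t|]; first by rewrite invr_ge0 ler0n.
by rewrite sumr_const -(mulr_natr (_^-1)) mulVf // pnatr_eq0 -lt0n.
Qed.

Lemma ord2_cases (n : 'I_2) : n = ord0 \/ n = lift ord0 ord0.
Proof. by case: n => -[|[|//]] ?; [left | right]; apply: val_inj. Qed.

Lemma subr_natb_neq0 (K : nzRingType) (b b' : bool) : b != b' -> (b%:R - b'%:R : K) != 0.
Proof. by case: b; case: b' => //= _; rewrite ?subr0 ?sub0r ?oppr_eq0 oner_eq0. Qed.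

Section SchemeEntropy.
Variables (F : finFieldType) (L : nat) (R : realType) (S : scheme F L R).
Hypotheses (dF : is_dist (pF S)) (dR : is_dist (pR S)).

Local Notation Om := (Omega S).
Local Notation P := (@Pr F L R S).
Local Notation M := (#|msgs F L|%:R : R).
Local Notation lq := (ln ((qF F)%:R : R)).
Local Notation rvF := (@rvF F L R S).
Local Notation rvR := (@rvR F L R S).
Local Notation rvW := (@rvW F L R S).
Local Notation rvWk := (@rvWk F L R S).
Local Notation rvWbar := (@rvWbar F L R S).
Local Notation rvQ := (@rvQ F L R S).
Local Notation rvA := (@rvA F L R S).

Definition condMI (T U V : finType) (X : Om -> T) (Y : Om -> U) (Z : Om -> V) : R :=
  H (fun w => (X w, Z w)) + H (fun w => (Y w, Z w)) - H (fun w => (X w, Y w, Z w)) - H Z.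

Lemma card_msgs_gt0 : 0 < M.
Proof. by rewrite ltr0n; apply/card_gt0P; exists 0. Qed.

Lemma Pr_ge0 (w : Om) : 0 <= P w.
Proof.
rewrite /Pr divr_ge0 ?(ltW card_msgs_gt0) // mulr_ge0 //; [case: dF | case: dR] => //.
Qed.

Lemma sum_Om_mul (a : sTF S -> R) (b : sTR S * msgs F L -> R) :
  \sum_(w : Om) a w.1.1 * b (w.1.2, w.2) = (\sum_x a x) * (\sum_y b y).
Proof.
rewrite -(pair_bigA _ (fun (xy : sTF S * sTR S) c => a xy.1 * b (xy.2, c))) /=.
rewrite -(pair_bigA _ (fun x y => \sum_c a x * b (y, c))) /= big_distrl /=.
apply: eq_bigr => x _; rewrite (pair_bigA _ (fun j c => a x * b (j, c))) big_distrr /=.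
by apply: eq_bigr => -[].
Qed.

Lemma mulrn_card_msgs (x : R) : x / M *+ #|msgs F L| = x.
Proof. by rewrite -mulr_natr mulfVK // gt_eqF // card_msgs_gt0. Qed.

Lemma sum_pR_div : \sum_(y : sTR S * msgs F L) pR S y.1 / M = 1.
Proof.
rewrite -(pair_bigA _ (fun y c => pR S y / M)).
transitivity (\sum_(y : sTR S) pR S y); last by case: dR.
by apply: eq_bigr => y _; rewrite sumr_const; exact: mulrn_card_msgs.
Qed.

Lemma sum_Pr : \sum_(w : Om) P w = 1.
Proof.
transitivity (\sum_(w : Om) pF S w.1.1 * (fun y => pR S y.1 / M) (w.1.2, w.2)).
  by apply: eq_bigr => w _; rewrite /Pr mulrA.
by rewrite (sum_Om_mul (pF S) (fun y => pR S y.1 / M)) sum_pR_div mulr1; case: dF.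
Qed.

Lemma law_ge0 (T : finType) (X : Om -> T) t : 0 <= law X t.
Proof. by apply: sumr_ge0 => w _; exact: Pr_ge0. Qed.

Lemma sum_law_mul (T : finType) (X : Om -> T) (phi : T -> R) :
  \sum_t law X t * phi t = \sum_w P w * phi (X w).
Proof.
rewrite [RHS](partition_big X xpredT) //=; apply: eq_bigr => t _.
by rewrite /law big_distrl /=; apply: eq_big => [w|w /eqP ->].
Qed.

Lemma sum_law (T : finType) (X : Om -> T) : \sum_t law X t = 1.
Proof.
transitivity (\sum_t law X t * 1); first by apply: eq_bigr => t _; rewrite mulr1.
by rewrite sum_law_mul; under eq_bigr do rewrite mulr1; exact: sum_Pr.
Qed.

Lemma Pr_le_law (T : finType) (X : Om -> T) w : P w <= law X (X w).
Proof. by rewrite /law (bigD1 w) //= lerDl sumr_ge0 // => w' _; exact: Pr_ge0. Qed.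

Lemma law_gt0 (T : finType) (X : Om -> T) w : 0 < P w -> 0 < law X (X w).
Proof. by move=> Pw; apply: lt_le_trans Pw (Pr_le_law X w). Qed.

Lemma law_le1 (T : finType) (X : Om -> T) t : law X t <= 1.
Proof.
by rewrite -(sum_law X) (bigD1 t) //= lerDl sumr_ge0 // => t' _; exact: law_ge0.
Qed.

Lemma ln_q_gt0 : 0 < lq.
Proof. by rewrite ln_gt0 // ltr1n qF_gt1. Qed.

Lemma H_expect (T : finType) (X : Om -> T) :
  H X = - \sum_w P w * (ln (law X (X w)) / lq).
Proof.
rewrite /H -(sum_law_mul X (fun t => ln (law X t) / lq)); congr (- _).
by apply: eq_bigr => t _; case: ifP => [/eqP ->|//]; rewrite mul0r.
Qed.

Lemma sum_Pr_divr (a : Om -> R) :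
  \sum_w P w * (a w / lq) = (\sum_w P w * a w) / lq.
Proof. by rewrite big_distrl; apply: eq_bigr => w _; rewrite mulrA. Qed.

Lemma ler_sum_Pr (f g : Om -> R) : (forall w, 0 < P w -> f w <= g w) ->
  \sum_w P w * f w <= \sum_w P w * g w.
Proof.
move=> fg; apply: ler_sum => w _; have := Pr_ge0 w.
rewrite le_eqVlt => /orP[/eqP <-|Pw]; first by rewrite !mul0r.
by rewrite ler_wpM2l ?fg // ltW.
Qed.

Lemma eq_sum_Pr (f g : Om -> R) : (forall w, 0 < P w -> f w = g w) ->
  \sum_w P w * f w = \sum_w P w * g w.
Proof. by move=> fg; apply/le_anti/andP; split; apply: ler_sum_Pr => w /fg ->. Qed.

(* Gibbs' inequality, from [ln x <= x - 1]. *)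
Lemma sum_Pr_ln_le0 (r : Om -> R) : (forall w, 0 < P w -> 0 < r w) ->
  \sum_w P w * r w <= 1 -> \sum_w P w * ln (r w) <= 0.
Proof.
move=> r_gt0 r_le1; apply: (@le_trans _ _ (\sum_w P w * (r w - 1))).
  apply: ler_sum_Pr => w Pw; have := @le_ln1Dx R (r w - 1).
  by rewrite (addrC 1) subrK; apply; have := r_gt0 w Pw; lra.
by under eq_bigr do rewrite mulrBr mulr1; rewrite sumrB sum_Pr subr_le0.
Qed.

Lemma H_le_of_det (T U : finType) (X : Om -> T) (Y : Om -> U) :
  (forall w w', Y w = Y w' -> X w = X w') -> H X <= H Y.
Proof.
move=> det; rewrite !H_expect lerN2; apply: ler_sum_Pr => w Pw.
rewrite ler_pM2r ?invr_gt0 ?ln_q_gt0 // ler_ln ?posrE ?law_gt0 //.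
rewrite /law big_mkcond [X in _ <= X]big_mkcond /=; apply: ler_sum => w' _.
case: eqP => [/det ->|_]; first by rewrite eqxx.
by case: ifP => _ //; exact: Pr_ge0.
Qed.

Lemma H_comp_le (T U : finType) (f : U -> T) (Y : Om -> U) :
  H (fun w => f (Y w)) <= H Y.
Proof. by apply: H_le_of_det => w w' ->. Qed.

Lemma H_eq_of_det (T U : finType) (X : Om -> T) (Y : Om -> U) :
  (forall w w', Y w = Y w' -> X w = X w') ->
  (forall w w', X w = X w' -> Y w = Y w') -> H X = H Y.
Proof. by move=> XY YX; apply/le_anti/andP; split; apply: H_le_of_det. Qed.

Lemma H_eq_of_comp (T U : finType) (f : U -> T) (g : T -> U) (X : Om -> T) (Y : Om -> U) :
  (forall w, X w = f (Y w)) -> (forall w, Y w = g (X w)) -> H X = H Y.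
Proof. by move=> XY YX; apply: H_eq_of_det => w w' E; [rewrite !XY E | rewrite !YX E]. Qed.

Lemma H_ge0 (T : finType) (X : Om -> T) : 0 <= H X.
Proof.
rewrite H_expect oppr_ge0 sumr_le0 // => w _; rewrite mulr_ge0_le0 ?Pr_ge0 //.
by rewrite pmulr_lle0 ?invr_gt0 ?ln_q_gt0 // ln_le0 // law_le1.
Qed.

Lemma sum_law_pair (T U : finType) (X : Om -> T) (Z : Om -> U) z :
  \sum_x law (fun w => (X w, Z w)) (x, z) = law Z z.
Proof.
rewrite /law [RHS](partition_big X xpredT) //=; apply: eq_bigr => x _.
by apply: eq_bigl => w; rewrite xpair_eqE andbC.
Qed.


Lemma sum_Pr_cond_ratio_le1 (T1 T2 T3 : finType)
    (X : Om -> T1) (Y : Om -> T2) (Z : Om -> T3) :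
  \sum_w P w * (law (fun w => (X w, Z w)) (X w, Z w) * law (fun w => (Y w, Z w)) (Y w, Z w)
     / (law (fun w => (X w, Y w, Z w)) (X w, Y w, Z w) * law Z (Z w))) <= 1.
Proof.
set XYZ := (fun w => (X w, Y w, Z w)); set XZ := (fun w => (X w, Z w)).
set YZ := (fun w => (Y w, Z w)).
pose psi (t : T1 * T2 * T3) := law XZ (t.1.1, t.2) * law YZ (t.1.2, t.2) / law Z t.2.
rewrite -(sum_law_mul XYZ (fun t => law XZ (t.1.1, t.2) * law YZ (t.1.2, t.2) /
                                     (law XYZ t * law Z t.2))).
apply: (@le_trans _ _ (\sum_t psi t)).
  apply: ler_sum => t _; have [->|nz] := eqVneq (law XYZ t) 0.
    by rewrite mul0r divr_ge0 ?mulr_ge0 ?law_ge0.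
  by rewrite invfM mulrCA mulVKf.
rewrite (eq_bigr (fun t => psi (t.1, t.2))); last by case.
rewrite -(pair_bigA _ (fun xy z => psi (xy, z))) exchange_big /= -(sum_law Z).
apply: ler_sum => z _.
have -> : \sum_(xy : T1 * T2) psi (xy, z) =
    (\sum_x law XZ (x, z)) * (\sum_y law YZ (y, z)) / law Z z.
  rewrite (eq_bigr (fun t => psi ((t.1, t.2), z))); last by case.
  rewrite -(pair_bigA _ (fun x y => psi ((x, y), z))) /= !big_distrl /=.
  apply: eq_bigr => x _; rewrite big_distrr /= big_distrl /=.
  by apply: eq_bigr => y _.
rewrite /XZ /YZ !sum_law_pair; have [->|nz] := eqVneq (law Z z) 0.
  by rewrite mulr0 mul0r.
by rewrite mulfK.
Qed.

Lemma condMI_ge0 (T1 T2 T3 : finType) (X : Om -> T1) (Y : Om -> T2) (Z : Om -> T3) :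
  0 <= condMI X Y Z.
Proof.
set XYZ := (fun w => (X w, Y w, Z w)); set XZ := (fun w => (X w, Z w)).
set YZ := (fun w => (Y w, Z w)).
pose r w := law XZ (XZ w) * law YZ (YZ w) / (law XYZ (XYZ w) * law Z (Z w)).
have r_gt0 w : 0 < P w -> 0 < r w.
  by move=> Pw; rewrite /r divr_gt0 ?mulr_gt0 ?law_gt0.
have := sum_Pr_ln_le0 r_gt0 (sum_Pr_cond_ratio_le1 X Y Z).
have -> : \sum_w P w * ln (r w) = \sum_w P w * (ln (law XZ (XZ w)) +
    ln (law YZ (YZ w)) - ln (law XYZ (XYZ w)) - ln (law Z (Z w))).
  apply: eq_sum_Pr => w Pw.
  by rewrite /r ln_div ?posrE ?mulr_gt0 ?law_gt0 // !lnM ?posrE ?law_gt0 // opprD addrA.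
under eq_bigr do rewrite !mulrBr mulrDr.
rewrite !sumrB big_split /= => ineq.
have E (a b c d : R) : - (a / lq) + - (b / lq) - - (c / lq) - - (d / lq) =
    - (a + b - c - d) / lq by ring.
by rewrite /condMI !H_expect !sum_Pr_divr E divr_ge0 ?oppr_ge0 // ltW // ln_q_gt0.
Qed.

Lemma H_pair_comp_submod (T U V : finType) (phi : U -> V) (X : Om -> T) (Y : Om -> U) :
  H (fun w => (X w, Y w)) + H (fun w => phi (Y w)) <= H (fun w => (X w, phi (Y w))) + H Y.
Proof.
have := condMI_ge0 X Y (fun w => phi (Y w)); rewrite /condMI.
rewrite (H_eq_of_comp (f := fun t => (t.1, t.2, phi t.2)) (g := fun t => (t.1.1, t.1.2))
  (Y := fun w => (X w, Y w))) //.
rewrite (H_eq_of_comp (f := fun t => (t, phi t)) (g := fst) (Y := Y)) //.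
lra.
Qed.

Lemma H_pair_unit (T : finType) (X : Om -> T) : H (fun w => (X w, tt)) = H X.
Proof. by apply: H_eq_of_det => w w' => [->|[]]. Qed.

Lemma H_pair_le (T U : finType) (X : Om -> T) (Y : Om -> U) :
  H (fun w => (X w, Y w)) <= H X + H Y.
Proof.
have := condMI_ge0 X Y (fun _ => tt); rewrite /condMI !H_pair_unit.
by have := H_ge0 (fun _ => tt); lra.
Qed.

Lemma H_pairC (T U : finType) (X : Om -> T) (Y : Om -> U) :
  H (fun w => (X w, Y w)) = H (fun w => (Y w, X w)).
Proof. by apply: H_eq_of_det => w w' [-> ->]. Qed.

Lemma MI_ge0 (T U : finType) (X : Om -> T) (Y : Om -> U) : 0 <= MI X Y.
Proof. by rewrite /MI subr_ge0 H_pair_le. Qed.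

Lemma MIC (T U : finType) (X : Om -> T) (Y : Om -> U) : MI X Y = MI Y X.
Proof. by rewrite /MI H_pairC (addrC (H X)). Qed.

Lemma MI_le_of_detl (T T' U : finType) (X : Om -> T) (X' : Om -> T') (Y : Om -> U) :
  (forall w w', X w = X w' -> X' w = X' w') -> MI X' Y <= MI X Y.
Proof.
move=> det; have := condMI_ge0 X Y X'; rewrite /MI /condMI.
have -> : H (fun w => (X w, X' w)) = H X.
  by apply: H_eq_of_det => [w w' E | w w' []] //; rewrite (det _ _ E) E.
rewrite [H (fun w => (Y w, X' w))]H_pairC.
by have := H_comp_le (fun t => t.1) (fun w => (X w, Y w, X' w)); lra.
Qed.

Lemma MI_le_of_detr (T U U' : finType) (X : Om -> T) (Y : Om -> U) (Y' : Om -> U') :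
  (forall w w', Y w = Y w' -> Y' w = Y' w') -> MI X Y' <= MI X Y.
Proof. by move=> det; rewrite MIC [MI X Y]MIC; exact: MI_le_of_detl. Qed.

Lemma card_codom_gt0 (T : finType) (X : Om -> T) : (0 < #|T|)%N.
Proof.
case: (pickP (@predT Om)) => [w _|Om0]; first by apply/card_gt0P; exists (X w).
by have := sum_Pr; rewrite big_pred0 // => /eqP; rewrite eq_sym oner_eq0.
Qed.

Lemma H_le_log_card (T : finType) (X : Om -> T) : H X <= logb (qF F) #|T|%:R.
Proof.
have n_gt0 : 0 < (#|T|%:R : R) by rewrite ltr0n (card_codom_gt0 X).
pose r w := (law X (X w) * #|T|%:R)^-1.
have r_gt0 w : 0 < P w -> 0 < r w by move=> Pw; rewrite invr_gt0 mulr_gt0 ?law_gt0.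
have r_le1 : \sum_w P w * r w <= 1.
  rewrite -(sum_law_mul X (fun t => (law X t * #|T|%:R)^-1)).
  apply: (@le_trans _ _ (\sum_(t : T) (#|T|%:R)^-1)).
    apply: ler_sum => t _; have [->|nz] := eqVneq (law X t) 0.
      by rewrite mul0r invr_ge0 ltW.
    by rewrite invfM mulVKf.
  by rewrite sumr_const -(mulr_natr (#|T|%:R)^-1) mulVf // gt_eqF.
have := sum_Pr_ln_le0 r_gt0 r_le1.
rewrite (eq_sum_Pr (g := fun w => - (ln (law X (X w)) + ln (#|T|%:R)))); last first.
  by move=> w Pw; rewrite lnV ?posrE ?mulr_gt0 ?law_gt0 // lnM ?posrE ?law_gt0.
under eq_bigr do rewrite mulrN mulrDr.
rewrite sumrN big_split /= -big_distrl /= sum_Pr mul1r => ineq.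
rewrite H_expect sum_Pr_divr /logb -mulNr ler_pM2r ?invr_gt0 ?ln_q_gt0 //; lra.
Qed.

Lemma H_uniform (T : finType) (X : Om -> T) c :
  (forall t, law X t = c) -> H X = logb (qF F) #|T|%:R.
Proof.
move=> Xc; have n_gt0 : 0 < (#|T|%:R : R) by rewrite ltr0n (card_codom_gt0 X).
have cE : c = (#|T|%:R)^-1.
  have := sum_law X; under eq_bigr do rewrite Xc.
  rewrite sumr_const -(mulr_natr c) => h.
  by rewrite -[c](mulfK (lt0r_neq0 n_gt0)) h mul1r.
rewrite /H; under eq_bigr do rewrite Xc.
rewrite cE invr_eq0 gt_eqF // sumr_const -(mulr_natr (_ * _)) /logb lnV ?posrE //.
by field; rewrite !gt_eqF ?ln_q_gt0.
Qed.

Lemma law_comp (T U : finType) (V : Om -> T) (g : T -> U) u :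
  law (fun w => g (V w)) u = \sum_(t | g t == u) law V t.
Proof.
rewrite /law (partition_big V (fun t => g t == u)) //.
apply: eq_bigr => t /eqP gt; apply: eq_bigl => w.
by case: (eqVneq (V w) t) => [->|]; rewrite ?gt ?eqxx ?andbF.
Qed.

Lemma eq_law_H (T : finType) (X Y : Om -> T) :
  law X =1 law Y -> H X = H Y.
Proof. by move=> XY; rewrite /H; congr (- _); apply: eq_bigr => t _; rewrite XY. Qed.

Lemma eq_law_MI (T A B : finType) (V V' : Om -> T) (f : T -> A) (g : T -> B) :
  law V =1 law V' ->
  MI (fun w => f (V w)) (fun w => g (V w)) = MI (fun w => f (V' w)) (fun w => g (V' w)).
Proof.
move=> VV'; have comp_eq (C : finType) (h : T -> C) :
    H (fun w => h (V w)) = H (fun w => h (V' w)).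
  by apply: eq_law_H => c; rewrite !law_comp; apply: eq_bigr => t _; rewrite VV'.
by rewrite /MI (comp_eq _ f) (comp_eq _ g) (comp_eq _ (fun t => (f t, g t))).
Qed.

Lemma law_comp_inj (T : finType) (X : Om -> T) (sig : Om -> Om) :
  injective sig -> (forall w, P (sig w) = P w) -> law (fun w => X (sig w)) =1 law X.
Proof.
move=> sig_inj Psig t; rewrite /law [RHS](reindex_inj sig_inj) /=.
by apply: eq_bigr => w _; rewrite Psig.
Qed.

Lemma sum_Pr_split (a : sTF S -> bool) (b : sTR S * msgs F L -> bool) :
  \sum_(w : Om | a w.1.1 && b (w.1.2, w.2)) P w =
  (\sum_(u | a u) pF S u) * (\sum_(v | b v) pR S v.1 / M).
Proof.
rewrite big_mkcond /= [\sum_(u | a u) _]big_mkcond [\sum_(v | b v) _]big_mkcond /=.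
rewrite -(sum_Om_mul (fun u => if a u then pF S u else 0)
                    (fun v => if b v then pR S v.1 / M else 0)).
apply: eq_bigr => w _; rewrite /Pr /=.
by case: (a _); case: (b _); rewrite /= ?mul0r ?mulr0 ?mulrA.
Qed.

Lemma law_indep (T1 T2 : finType) (f : sTF S -> T1) (g : sTR S * msgs F L -> T2) x y :
  law (fun w => (f w.1.1, g (w.1.2, w.2))) (x, y) =
  law (fun w => f w.1.1) x * law (fun w => g (w.1.2, w.2)) y.
Proof.
have -> : law (fun w => (f w.1.1, g (w.1.2, w.2))) (x, y) =
    \sum_(w : Om | (f w.1.1 == x) && (g (w.1.2, w.2) == y)) P w.
  by apply: eq_bigl => w; rewrite xpair_eqE.
have -> : law (fun w => f w.1.1) x =
    \sum_(w : Om | (f w.1.1 == x) && xpredT (w.1.2, w.2)) P w.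
  by apply: eq_bigl => w; rewrite andbT.
have -> : law (fun w => g (w.1.2, w.2)) y =
    \sum_(w : Om | xpredT w.1.1 && (g (w.1.2, w.2) == y)) P w by [].
rewrite (sum_Pr_split (fun u => f u == x) (fun v => g v == y)).
rewrite (sum_Pr_split (fun u => f u == x) xpredT) (sum_Pr_split xpredT (fun v => g v == y)).
by rewrite sum_pR_div; case: dF => _ ->; rewrite mulr1 mul1r.
Qed.

Lemma H_indep (T1 T2 : finType) (f : sTF S -> T1) (g : sTR S * msgs F L -> T2) :
  H (fun w => (f w.1.1, g (w.1.2, w.2))) =
  H (fun w => f w.1.1) + H (fun w => g (w.1.2, w.2)).
Proof.
rewrite !H_expect !sum_Pr_divr -!mulNr -mulrDl -opprD -big_split /=; congr (- _ / _).
under [RHS]eq_bigr do rewrite -mulrDr.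
apply: eq_sum_Pr => w Pw; rewrite law_indep lnM ?posrE //.
  exact: (law_gt0 (fun w => f w.1.1) Pw).
exact: (law_gt0 (fun w => g (w.1.2, w.2)) Pw).
Qed.

(* [V] is independent of [F] and [B] sees [F] only through the query [phi F]:
   the Markov chain [F -- phi F -- (V, B)]. *)
Lemma condMI_le_MI_query (T1 T2 T3 : finType) (phi : sTF S -> T1)
    (V : sTR S * msgs F L -> T2) (B : T1 -> sTR S * msgs F L -> T3) :
  condMI (fun w : Om => V (w.1.2, w.2)) (fun w : Om => B (phi w.1.1) (w.1.2, w.2))
         (fun w : Om => w.1.1)
  <= MI (fun w : Om => V (w.1.2, w.2))
        (fun w : Om => (B (phi w.1.1) (w.1.2, w.2), phi w.1.1)).
Proof.
have query_det := H_pair_comp_submod phi (fun w : Om => B (phi w.1.1) (w.1.2, w.2))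
                                    (fun w : Om => w.1.1).
have markov : H (fun w : Om => w.1.1)
    + H (fun w : Om => (V (w.1.2, w.2), B (phi w.1.1) (w.1.2, w.2), phi w.1.1))
    <= H (fun w : Om => phi w.1.1)
    + H (fun w : Om => (V (w.1.2, w.2), B (phi w.1.1) (w.1.2, w.2), w.1.1)).
  have := condMI_ge0 (fun w : Om => (w.1.2, w.2)) (fun w : Om => w.1.1)
    (fun w : Om => (V (w.1.2, w.2), B (phi w.1.1) (w.1.2, w.2), phi w.1.1)).
  rewrite /condMI.
  rewrite (H_eq_of_comp (f := fun t => (t, (V t.1, B (phi t.2) t.1, phi t.2))) (g := fst)
    (Y := fun w : Om => ((w.1.2, w.2), w.1.1))) //.
  rewrite (H_eq_of_comp (f := fun t => (t.1, (V t.1, B t.2 t.1, t.2))) (g := fun t => (t.1, t.2.2))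
    (Y := fun w : Om => ((w.1.2, w.2), phi w.1.1))) //.
  rewrite (H_eq_of_comp (f := fun t => (t.2, (t.1.1, t.1.2, phi t.2)))
    (g := fun t => (t.2.1.1, t.2.1.2, t.1))
    (Y := fun w : Om => (V (w.1.2, w.2), B (phi w.1.1) (w.1.2, w.2), w.1.1))) //.
  have := H_indep (fun x => x) (fun v => v); rewrite H_pairC /= => ->.
  have := H_pair_le (fun w : Om => (w.1.2, w.2)) (fun w : Om => phi w.1.1).
  lra.
have V_indep : H (fun w : Om => (V (w.1.2, w.2), w.1.1))
    = H (fun w : Om => V (w.1.2, w.2)) + H (fun w : Om => w.1.1).
  by have := H_indep (fun x => x) V; rewrite H_pairC addrC.
rewrite /condMI /MI V_indep.
rewrite (H_eq_of_comp (f := fun t => (t.1.1, (t.1.2, t.2))) (g := fun t => (t.1, t.2.1, t.2.2))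
  (Y := fun w : Om => (V (w.1.2, w.2), B (phi w.1.1) (w.1.2, w.2), phi w.1.1))) //.
lra.
Qed.

Lemma H_rvW : H rvW = 3%:R * L%:R.
Proof.
rewrite (@H_uniform _ _ M^-1) ?card_msgs ?logb_expn ?natrM ?qF_gt1 // => W0.
have -> : law rvW W0 =
    \sum_(w : Om | xpredT w.1.1 && (fun v => v.2 == W0) (w.1.2, w.2)) P w by [].
rewrite (sum_Pr_split xpredT (fun v => v.2 == W0)).
have -> : \sum_(u | xpredT u) pF S u = 1 by case: dF.
rewrite mul1r -(pair_big xpredT (fun W => W == W0) (fun r W => pR S r / M)) /=.
transitivity (\sum_(r : sTR S) pR S r / M).
  by apply: eq_bigr => r _; rewrite big_pred1_eq.
by rewrite -big_distrl /=; case: dR => _ ->; rewrite mul1r card_msgs.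
Qed.

Lemma H_rvWbar_le (k : 'I_3) : H (rvWbar k) <= 2%:R * L%:R.
Proof.
apply: (@le_trans _ _ (H (fun w : Om => (w.2 (lift k ord0), w.2 (lift k (lift ord0 ord0)))))).
  apply: H_le_of_det => w w' [E0 E1]; apply/ffunP => j; rewrite !ffunE.
  case: (unliftP k j) => [j'|] ->; last by rewrite eqxx.
  rewrite eq_sym (negbTE (neq_lift _ _)).
  by have [->|->] := ord2_cases j'.
apply: le_trans (H_le_log_card _) _.
by rewrite card_prod card_rV -expnD logb_expn ?qF_gt1 // natrD mulr2n mulrDl mul1r.
Qed.

Lemma H_rvW_le (k : 'I_3) :
  H rvW <= H (rvWk k) + H (rvWbar k).
Proof.
apply: le_trans (H_pair_le _ _); apply: H_le_of_det => w w' [Ek Ebar].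
apply/ffunP => j; have [->|jk] := eqVneq j k; first exact: Ek.
by have := congr1 (fun W : msgs F L => W j) Ebar; rewrite !ffunE (negbTE jk).
Qed.

Lemma H_rvWk_ge (k : 'I_3) : L%:R <= H (rvWk k).
Proof. by have := H_rvW_le k; rewrite H_rvW; have := H_rvWbar_le k; lra. Qed.

Section Converse.
Hypothesis SV : valid S.

Local Notation rvY k :=
  (fun w : Om => (rvF w, rvA ord0 k w, rvA (lift ord0 ord0) k w)).

Lemma view_det_answer_query (k : 'I_3) (n : 'I_2) (w w' : Om) :
  rvY k w = rvY k w' -> (rvA n k w, rvQ n k w) = (rvA n k w', rvQ n k w').
Proof.
case=> EF E0 E1; rewrite /rvQ EF.
have [->|->] := ord2_cases n.
- by rewrite E0.
- by rewrite E1.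
Qed.

(* User privacy moves [(A_n, Q_n)] to the retrieval of [W_k'], which reveals
   nothing about [W_k] by database privacy. *)
Lemma MI_answer_query_le0 (k k' : 'I_3) (n : 'I_2) : k != k' ->
  MI (rvWk k) (fun w : Om => (rvA n k w, rvQ n k w)) <= 0.
Proof.
case: SV => _ _ _ user_priv db_priv kk'.
have -> : MI (rvWk k) (fun w : Om => (rvA n k w, rvQ n k w)) =
          MI (rvWk k) (fun w : Om => (rvA n k' w, rvQ n k' w)).
  have E : law (fun w : Om => (rvQ n k w, rvA n k w, rvW w, rvR w)) =1
           law (fun w : Om => (rvQ n k' w, rvA n k' w, rvW w, rvR w)).
    by move=> t; rewrite (user_priv n k k' kk').
  exact: (eq_law_MI (fun t : 'I_4 * sTA S n * msgs F L * sTR S => t.1.2 k)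
                    (fun t => (t.1.1.2, t.1.1.1)) E).
rewrite -(db_priv k'); apply: le_trans (MI_le_of_detr _ (view_det_answer_query n)).
apply: MI_le_of_detl => w w' /(congr1 (fun W : msgs F L => W k)).
by rewrite !ffunE (negbTE kk').
Qed.

Lemma condMI_answer_le0 (k : 'I_3) (n : 'I_2) : condMI (rvWk k) (rvA n k) rvF <= 0.
Proof.
apply: le_trans (MI_answer_query_le0 n (neq_lift k ord0)).
exact: (condMI_le_MI_query (query S n k) (fun v => v.2 k)
                           (fun q v => answer S n q v.2 v.1)).
Qed.

Lemma H_view_ge (k : 'I_3) (n : 'I_2) :
  H (rvWk k) + H (fun w : Om => (rvA n k w, rvF w)) <= H (rvY k).
Proof.
have := condMI_answer_le0 k n; rewrite /condMI.
have -> : H (fun w : Om => (rvWk k w, rvF w)) = H (rvWk k) + H rvF.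
  by have := H_indep (fun x => x) (fun v => v.2 k); rewrite H_pairC addrC.
have : H (fun w : Om => (rvWk k w, rvA n k w, rvF w)) <=
       H (fun w : Om => (rvWk k w, rvY k w)).
  apply: H_le_of_det => w w' E; have /= EY := congr1 snd E.
  case: (view_det_answer_query n EY) => EA _.
  by case: E => Ek EF _ _; rewrite Ek EA EF.
case: SV => _ _ /(_ k) + _ _; rewrite /condH; lra.
Qed.

Lemma H_answer_user_ge (k : 'I_3) (n : 'I_2) :
  H (rvWk k) + H rvF <= H (fun w : Om => (rvA n k w, rvF w)).
Proof.
have := condMI_ge0 (rvA ord0 k) (rvA (lift ord0 ord0) k) rvF; rewrite /condMI.
rewrite (H_eq_of_comp (f := fun t => (t.1.2, t.2, t.1.1)) (g := fun t => (t.2, t.1.1, t.1.2))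
  (Y := rvY k)) //.
have := H_view_ge k ord0; have := H_view_ge k (lift ord0 ord0).
have [->|->] := ord2_cases n.
all: lra.
Qed.

Lemma download_ge : 2 * L%:R <= download S.
Proof.
have A_ge n : (L%:R : R) <= logb (qF F) #|sTA S n|%:R.
  apply: le_trans _ (H_le_log_card (rvA n ord0)).
  have := H_rvWk_ge ord0; have := H_answer_user_ge ord0 n.
  have := H_pair_le (rvA n ord0) rvF; lra.
rewrite /download big_ord_recl big_ord1.
by have := A_ge ord0; have := A_ge (lift ord0 ord0); lra.
Qed.

Lemma common_rand_ge : L%:R <= common_rand S.
Proof.
have view_le : H (fun w : Om => (rvWbar ord0 w, rvY ord0 w)) <= H rvR + H rvF + H rvW.
  apply: le_trans (H_comp_le (fun t : sTR S * (sTF S * msgs F L) =>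
    ([ffun j => if j == ord0 then 0 else t.2.2 j],
     (t.2.1, answer S ord0 (query S ord0 ord0 t.2.1) t.2.2 t.1,
      answer S (lift ord0 ord0) (query S (lift ord0 ord0) ord0 t.2.1) t.2.2 t.1)))
    (fun w : Om => (rvR w, (rvF w, rvW w)))) _.
  have := H_pair_le rvR (fun w : Om => (rvF w, rvW w)); have := H_pair_le rvF rvW; lra.
have := H_view_ge ord0 ord0; have := H_answer_user_ge ord0 ord0.
have := H_rvW_le ord0; have := H_rvWk_ge ord0.
case: SV => _ _ _ _ /(_ ord0); rewrite /MI /common_rand; lra.
Qed.

End Converse.

End SchemeEntropy.

(* The scheme of the paper: database [0] answers query [0] with [r] and query
   [i.+1] with [r + \sum_(j != i) W_j]; database [1] answers query [0] with
   [r + \sum_j W_j] and query [i.+1] with [r + W_i].  To retrieve [W_k] the user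
   sends a uniform [s] to database [0] and [partner k s], the bitwise xor of [s]
   and [k.+1], to database [1]: the two answers then differ by [+- W_k]. *)
Definition coef (n : 'I_2) (s : 'I_4) (j : 'I_3) : bool :=
  if val n == 0 then (val s != 0) && (val j != (val s).-1)
  else (val s == 0) || (val j == (val s).-1).

Definition partner (k : 'I_3) (s : 'I_4) : 'I_4 :=
  @Ordinal 4 (Nat.lxor k.+1 s %% 4) (@ltn_pmod _ 4 isT).

Lemma coef_partner (k : 'I_3) (s : 'I_4) (j : 'I_3) :
  j != k -> coef ord0 s j = coef (lift ord0 ord0) (partner k s) j.
Proof.
by case: k => -[|[|[|//]]] ?; case: s => -[|[|[|[|//]]]] ?; case: j => -[|[|[|//]]] ?;
  vm_compute.
Qed.

Lemma coef_partner_neq (k : 'I_3) (s : 'I_4) :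
  coef ord0 s k != coef (lift ord0 ord0) (partner k s) k.
Proof. by case: k => -[|[|[|//]]] ?; case: s => -[|[|[|[|//]]]] ?; vm_compute. Qed.

Lemma partnerK (k : 'I_3) : involutive (partner k).
Proof.
move=> s; apply: val_inj.
by case: k => -[|[|[|//]]] ?; case: s => -[|[|[|[|//]]]] ?; vm_compute.
Qed.

Section Achievability.
Variables (F : finFieldType) (L : nat) (R : realType).

Definition sch_answer (n : 'I_2) (s : 'I_4) (W : msgs F L) (r : 'rV[F]_L) : 'rV[F]_L :=
  r + \sum_j (coef n s j)%:R *: W j.

Definition sch_query (n : 'I_2) (k : 'I_3) (s : 'I_4) : 'I_4 :=
  if val n == 0 then s else partner k s.

Definition sch : scheme F L R :=
  @Scheme F L R 'I_4 'rV[F]_L (fun _ => (#|'I_4|%:R)^-1) (fun _ => (#|'rV[F]_L|%:R)^-1)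
    (fun _ => 'rV[F]_L) sch_query sch_answer.

Local Notation Om := (Omega sch).
Local Notation rvF := (@rvF F L R sch).
Local Notation rvR := (@rvR F L R sch).
Local Notation rvWbar := (@rvWbar F L R sch).
Local Notation rvA := (@rvA F L R sch).
Local Notation rvY k :=
  (fun w : Om => (rvF w, rvA ord0 k w, rvA (lift ord0 ord0) k w)).

Lemma card_rV_gt0 : (0 < #|'rV[F]_L|)%N.
Proof. by apply/card_gt0P; exists 0. Qed.

Lemma is_dist_user : is_dist (pF sch).
Proof. by apply: is_dist_uniform; rewrite card_ord. Qed.

Lemma is_dist_common : is_dist (pR sch).
Proof. exact: is_dist_uniform card_rV_gt0. Qed.

Lemma sch_answer_sub (k : 'I_3) (s : 'I_4) (W : msgs F L) (r : 'rV[F]_L) :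
  sch_answer ord0 s W r - sch_answer (lift ord0 ord0) (partner k s) W r =
  ((coef ord0 s k)%:R - (coef (lift ord0 ord0) (partner k s) k)%:R) *: W k.
Proof.
rewrite /sch_answer opprD addrACA subrr add0r -sumrB (bigD1 k) //= big1 ?addr0.
  by rewrite scalerBl.
by move=> j jk; rewrite (coef_partner s jk) subrr.
Qed.

Lemma view_det_rvWk (k : 'I_3) (w w' : Om) : rvY k w = rvY k w' -> rvWk k w = rvWk k w'.
Proof.
move=> E; have EF : w.1.1 = w'.1.1 := congr1 (fun t => t.1.1) E.
have E0 : rvA ord0 k w = rvA ord0 k w' := congr1 (fun t => t.1.2) E.
have E1 : rvA (lift ord0 ord0) k w = rvA (lift ord0 ord0) k w' := congr1 snd E.
have sub_eq (w0 : Om) : rvA ord0 k w0 - rvA (lift ord0 ord0) k w0 =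
    ((coef ord0 w0.1.1 k)%:R - (coef (lift ord0 ord0) (partner k w0.1.1) k)%:R) *: rvWk k w0.
  exact: sch_answer_sub.
have := sub_eq w; rewrite E0 E1 sub_eq -EF => /esym /scalerI; apply.
exact/subr_natb_neq0/coef_partner_neq.
Qed.

Lemma sch_reliable (k : 'I_3) : condH (rvWk k) (rvY k) = 0.
Proof.
rewrite /condH (H_eq_of_det is_dist_user is_dist_common (X := fun w => (rvWk k w, rvY k w))
  (Y := rvY k)) ?subrr // => w w' E; first by rewrite (view_det_rvWk E) E.
exact: (congr1 snd E).
Qed.

Lemma sch_query_inj (n : 'I_2) (k : 'I_3) : injective (sch_query n k).
Proof.
move=> s s'; rewrite /sch_query; case: ifP => _ //.
by move/(congr1 (partner k)); rewrite !partnerK.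
Qed.

(* Under either index, [(Q_n, A_n, W, r)] is distributed as [(s, A_n(s), W, r)]
   for a uniform [s], because [sch_query n k] is a bijection. *)
Lemma sch_user_private (n : 'I_2) (k k' : 'I_3) :
  law (fun w : Om => (rvQ n k w, rvA n k w, rvW w, rvR w)) =
  law (fun w : Om => (rvQ n k' w, rvA n k' w, rvW w, rvR w)).
Proof.
pose X (w : Om) : 'I_4 * sTA sch n * msgs F L * sTR sch :=
  (w.1.1, sch_answer n w.1.1 w.2 w.1.2, w.2, w.1.2).
suff E k0 : law (fun w : Om => (rvQ n k0 w, rvA n k0 w, rvW w, rvR w)) =1 law X.
  by apply: boolp.funext => t; rewrite !E.
pose sig (w : Om) : Om := ((sch_query n k0 w.1.1, w.1.2), w.2).
have sig_inj : injective sig.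
  by move=> [[a b] c] [[a' b'] c'] [/sch_query_inj -> -> ->].
have Pr_sig w : Pr (sig w) = Pr w by [].
exact: (law_comp_inj X sig_inj Pr_sig).
Qed.

Lemma law_common_msgs (v : sTR sch * msgs F L) :
  law (fun w : Om => (w.1.2, w.2)) v = (#|'rV[F]_L|%:R)^-1 / #|msgs F L|%:R.
Proof.
have -> : law (fun w : Om => (w.1.2, w.2)) v =
    \sum_(w : Om | xpredT w.1.1 && (fun v' => v' == v) (w.1.2, w.2)) Pr w by [].
rewrite (sum_Pr_split xpredT (fun v' => v' == v)).
have -> : \sum_(u | xpredT u) pF sch u = 1 by case: is_dist_user.
by rewrite mul1r big_pred1_eq.
Qed.

Lemma H_common_msgs : H (fun w : Om => (w.1.2, w.2)) = 4%:R * L%:R.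
Proof.
rewrite (H_uniform is_dist_user is_dist_common law_common_msgs).
rewrite card_prod card_rV card_msgs -expnD logb_expn ?qF_gt1 // -natrM.
by congr (_%:R); lia.
Qed.

Lemma sch_common_rand : common_rand sch = L%:R.
Proof.
have law_R r : law rvR r = (#|'rV[F]_L|%:R)^-1.
  have -> : law rvR r = \sum_(w : Om | xpredT w.1.1 &&
      (fun v : sTR sch * msgs F L => v.1 == r) (w.1.2, w.2)) Pr w by [].
  rewrite (sum_Pr_split xpredT (fun v : sTR sch * msgs F L => v.1 == r)).
  have -> : \sum_(u | xpredT u) pF sch u = 1 by case: is_dist_user.
  rewrite mul1r (eq_bigl (fun v : sTR sch * msgs F L => (v.1 == r) && xpredT v.2)).
    rewrite -(pair_big (fun r' => r' == r) xpredT (fun r' W => pR sch r' / #|msgs F L|%:R)) /=.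
    by rewrite big_pred1_eq sumr_const; exact: mulrn_card_msgs.
  by move=> v; rewrite andbT.
by rewrite /common_rand (H_uniform is_dist_user is_dist_common law_R) card_rV logb_expn ?qF_gt1.
Qed.

Lemma H_sch_answer_le (n : 'I_2) (k : 'I_3) : H (rvA n k) <= L%:R.
Proof.
apply: le_trans (H_le_log_card is_dist_user is_dist_common _) _.
by rewrite card_rV logb_expn ?qF_gt1.
Qed.

(* The view [(F, A_0, A_1)] of the user together with [W_bar k] determines the
   whole sample, whose entropy [H F + 4 L] exhausts the bounds [H (W_bar k) <= 2 L]
   and [H (F, A_0, A_1) <= H F + 2 L]. *)
Lemma sch_db_private (k : 'I_3) : MI (rvWbar k) (rvY k) = 0.
Proof.
apply/le_anti/andP; split; last exact: (MI_ge0 is_dist_user is_dist_common).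
have Wbar_le := H_rvWbar_le is_dist_user is_dist_common k.
have Y_le : H (rvY k) <= H rvF + 2%:R * L%:R.
  apply: le_trans (H_pair_le is_dist_user is_dist_common _ _) _.
  have := H_pair_le is_dist_user is_dist_common rvF (rvA ord0 k).
  have := H_sch_answer_le ord0 k; have := H_sch_answer_le (lift ord0 ord0) k; lra.
have joint_ge : H rvF + 4%:R * L%:R <= H (fun w : Om => (rvWbar k w, rvY k w)).
  have -> : H rvF + 4%:R * L%:R = H (fun w : Om => w).
    rewrite -H_common_msgs -(H_indep is_dist_user is_dist_common (fun x => x) (fun v => v)).
    by apply: (H_eq_of_comp is_dist_user is_dist_common (f := fun t => (t.1.1, (t.1.2, t.2)))
                            (g := fun t => (t.1, t.2.1, t.2.2))) => -[[]].
  apply: (H_le_of_det is_dist_user is_dist_common) => -[[f r] W] [[f' r'] W'] E.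
  have /= EY := congr1 snd E; have /= Ebar := congr1 fst E.
  have EW : W = W'.
    apply/ffunP => j; have [->|jk] := eqVneq j k; first exact: view_det_rvWk EY.
    by have := congr1 (fun W : msgs F L => W j) Ebar; rewrite !ffunE (negbTE jk).
  case: EY; rewrite /Defs.rvF /Defs.rvA /Defs.rvQ /Defs.rvW /Defs.rvR /= => Ef EA _.
  by move: EA; rewrite /sch_answer Ef EW => /addIr ->.
rewrite /MI; lra.
Qed.

Lemma sch_valid : valid sch.
Proof.
split; [exact: is_dist_user | exact: is_dist_common | exact: sch_reliable | | exact: sch_db_private].
by move=> n k k' _; exact: sch_user_private.
Qed.

Lemma sch_download : download sch = 2 * L%:R.
Proof.
rewrite /download big_ord_recl big_ord1 /= card_rV logb_expn ?qF_gt1 //.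
by rewrite mulr2n mulrDl mul1r.
Qed.

End Achievability.

Theorem theorem3 (R : realType) :
  exists q0 : nat, forall (F : finFieldType) (L : nat),
    (q0 <= #|F|)%N -> (0 < L)%N ->
    (exists S : scheme F L R,
        valid S /\ download S = 2 * L%:R /\ common_rand S = L%:R) /\
    (forall S : scheme F L R,
        valid S -> 2 * L%:R <= download S /\ L%:R <= common_rand S).
Proof.
(* [sch] only uses the coefficients 0 and 1, so it works over every finite field. *)
exists 0%N => F L _ _; split.
  by exists (sch F L R); rewrite sch_download sch_common_rand; split; first exact: sch_valid.
move=> S SV; have [dF dR _ _ _] := SV.
by split; [exact: download_ge dF dR SV | exact: common_rand_ge dF dR SV].
Qed.
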